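(* Let $(\mathcal G,\Delta,\{V^i,U^i\}_{i=1}^n)$ be a partition exchange economy with cycle bound $\Delta\ge 2$. Then there exists a fractional exchange $y^*\in[0,1]^{\mathcal C_\Delta}$ in $\mathcal G$ with the following property: for every finite set $V^0$ of additional altruistic donors (with any choice of their out-arcs) and every exchange $\mathcal E^*$ in $\mathcal G^{+V^0}$, if $$u_i(\mathcal E^* )\ \ge\ \Big\lfloor \sum_{c\in\mathcal C_\Delta}\gamma^i_c\,y^*_c\Big\rfloor\quad\text{for all } i\in N,$$ then $\mathcal E^*$ belongs to the $V^0$-supplemented core.
   Context: A partition exchange economy $(\mathcal G,\Delta,\{V^i,U^i\}_{i=1}^n)$ consists of: a set of organizations $N=\{1,\dots,n\}$; pairwise disjoint finite sets $V^1,\dots,V^n$ with $V=V^1\cup\dots\cup V^n$; subsets $U^i\subseteq V^i$ (the patient vertices of organization $i$; vertices of $V^i\setminus U^i$ are altruistic donors); a directed compatibility graph $\mathcal G=(V,E)$ without loops (arc $(u,v)$: the donor of $u$ can give to the patient of $v$); and an integer cycle bound $\Delta\ge 2$. $\mathcal C_\Delta$ denotes the set of directed cycles of $\mathcal G$ of length at most $\Delta$. For $W\subseteq V$, an exchange among $W$ is a set of pairwise vertex-disjoint directed cycles of length at most $\Delta$ in the induced subgraph $\mathcal G[W]$. A fractional exchange is a vector $y\in[0,1]^{\mathcal C_\Delta}$ with $\sum_{c\in\mathcal C_\Delta:\,v\in c}y_c\le 1$ for every $v\in V$. For a cycle $c$ and organization $i$, $\gamma^i_c=|U^i\cap c|$.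 The utility of organization $i$ from an exchange $\mathcal E$ is $u_i(\mathcal E)$, the number of vertices of $U^i$ lying on cycles of $\mathcal E$. Additional altruistic donors: given a finite set $V^0$ of new vertices (belonging to no organization), the extended graph $\mathcal G^{+V^0}$ is obtained from $\mathcal G$ by adding the vertices of $V^0$, an arc from every other vertex into each $a\in V^0$, and for each $a\in V^0$ arcs from $a$ to an arbitrarily chosen set of vertices; an exchange in $\mathcal G^{+V^0}$ is a set of vertex-disjoint directed cycles of length at most $\Delta$ in $\mathcal G^{+V^0}$. A nonempty coalition $P\subseteq N$ blocks an exchange $\mathcal E$ (of $\mathcal G$ or $\mathcal G^{+V^0}$) if there is an exchange $\mathcal E'$ among $\bigcup_{i\in P}V^i$ (in $\mathcal G$, so vertices of $V^0$ cannot be used) with $u_i(\mathcal E')>u_i(\mathcal E)$ for all $i\in P$. An exchange $\mathcal E^*$ in $\mathcal G^{+V^0}$ is in the $V^0$-supplemented core if no nonempty coalition $P\subseteq N$ blocks it. *)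

From HB Require Import structures.
From mathcomp Require Import all_boot all_order all_algebra.
From mathcomp Require Import reals.
Set Implicit Arguments. Unset Strict Implicit. Unset Printing Implicit Defensive.
Import Order.TTheory GRing.Theory Num.Theory.

(* A directed cycle in a digraph on a finite vertex type T is encoded by its
   successor map: c v = Some w iff v lies on the cycle and its successor is w.
   This is a bijective encoding of directed cycles (no rotation duplicates). *)
Definition cyc (T : finType) := {ffun T -> option T}.

Definition on_cyc (T : finType) (c : cyc T) (v : T) : bool := c v != None.
Definition cyc_succ (T : finType) (c : cyc T) (v : T) : T := odflt v (c v).

Definition is_cycle (T : finType) (e : rel T) (D : nat) (c : cyc T) : bool :=
  [&& [exists v, on_cyc c v],
      [forall v, forall w, (c v == Some w) ==> (e v w && on_cyc c w)],
      [forall u, forall v, (on_cyc c u && on_cyc c v) ==> fconnect (cyc_succ c) u v]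
    & #|[set v | on_cyc c v]| <= D].

Definition exchange (T : finType) (e : rel T) (D : nat) (W : {set T})
    (X : {set cyc T}) : Prop :=
  (forall c, c \in X -> is_cycle e D c /\ (forall v, on_cyc c v -> v \in W)) /\
  (forall c1 c2, c1 \in X -> c2 \in X -> c1 != c2 ->
     forall v, ~~ (on_cyc c1 v && on_cyc c2 v)).

Definition covered (T : finType) (X : {set cyc T}) (v : T) : bool :=
  [exists c in X, on_cyc c v].

(* Partition exchange economy data: vertex type V, org : V -> 'I_n (so
   V^i = org^-1 i), patients U (so U^i = U :&: V^i), arcs E, cycle bound D. *)

Definition util (V : finType) (n : nat) (org : V -> 'I_n) (U : {set V})
    (i : 'I_n) (X : {set cyc V}) : nat :=
  #|[set v in U | (org v == i) && covered X v]|.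

(* extended graph G^{+V0}, with V0 encoded as the finite type A:
   arcs from every other vertex into each a in V0, arcs from a in V0 to
   the original vertices chosen by out. *)
Definition ext_graph (V A : finType) (E : rel V) (out : A -> V -> bool)
    : rel (V + A)%type :=
  fun x y => match y with
             | inr _ => x != y
             | inl w => match x with
                        | inl u => E u w
                        | inr a => out a w
                        end
             end.

Definition util_ext (V A : finType) (n : nat) (org : V -> 'I_n) (U : {set V})
    (i : 'I_n) (X : {set cyc (V + A)%type}) : nat :=
  #|[set v in U | (org v == i) && covered X (inl v)]|.

Definition blocks (V A : finType) (n : nat) (org : V -> 'I_n) (U : {set V})
    (E : rel V) (D : nat) (P : {set 'I_n}) (X : {set cyc (V + A)%type}) : Prop :=
  exists X' : {set cyc V},
    exchange E D [set v | org v \in P] X' /\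
    (forall i, i \in P -> util_ext org U i X < util org U i X')%N.

Definition in_supp_core (V A : finType) (n : nat) (org : V -> 'I_n)
    (U : {set V}) (E : rel V) (D : nat) (X : {set cyc (V + A)%type}) : Prop :=
  forall P : {set 'I_n}, P != set0 -> ~ blocks org U E D P X.

Definition gamma (V : finType) (n : nat) (org : V -> 'I_n) (U : {set V})
    (i : 'I_n) (c : cyc V) : nat :=
  #|[set v in U | (org v == i) && on_cyc c v]|.

Local Open Scope ring_scope.

Definition frac_exchange (R : realType) (V : finType) (E : rel V) (D : nat)
    (y : cyc V -> R) : Prop :=
  (forall c, is_cycle E D c -> 0 <= y c <= 1) /\
  (forall v, \sum_(c | is_cycle E D c && on_cyc c v) y c <= 1).

Definition frac_util (R : realType) (V : finType) (n : nat) (org : V -> 'I_n)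
    (U : {set V}) (E : rel V) (D : nat) (y : cyc V -> R) (i : 'I_n) : R :=
  \sum_(c | is_cycle E D c) (gamma org U i c)%:R * y c.

From HB Require Import structures.
From mathcomp Require Import all_boot all_order all_algebra.
From mathcomp Require Import reals.
From mathcomp Require Import boolp zify ring.
Set Implicit Arguments. Unset Strict Implicit. Unset Printing Implicit Defensive.
Import Order.TTheory GRing.Theory Num.Theory.

(* Apply Scarf's lemma to the matrix whose rows are the organizations and whose
   columns are the pairs (P, X) of a nonempty coalition P and an exchange X among
   its members, with right-hand side 1. Organization i ranks the columns
   containing it by its utility, below every column not containing it. Scarf's
   weights x then put total weight 1 on the columns containing each i, and every
   column z is dominated: some i weakly prefers all columns of the support of x
   to z. The fractional exchange y gives each cycle the weight of the columns
   using it. If P blocked through X', the column (P, X') would be dominated by a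
   member i of P, whose utility from X' is an integer at most its fractional
   utility, hence at most its rounded-down fractional utility and so at most its
   utility in the blocked exchange.

   Scarf's lemma is proved by its parity argument. A state pairs a
   lexicographically feasible basis containing the slack s0 with an ordinal
   basis avoiding s0 that shares its other columns. Lexicographic pivots and
   ordinal pivots each pair up the states, except the single initial one built
   from the slack basis, so some pivot leads to a basis that is both feasible
   and ordinal. *)

Lemma subset_card_succ (T : finType) (X Y : {set T}) :
  X \subset Y -> #|Y| = #|X|.+1 -> exists2 y, y \notin X & Y = y |: X.
Proof.
move=> sXY cardY.
have /cards1P[y YXy] : #|Y :\: X| == 1 by rewrite cardsD (setIidPr sXY) cardY subSnn.
have : y \in Y :\: X by rewrite YXy set11.
rewrite inE => /andP[yX yY]; exists y => //.
apply/setP=> z; rewrite in_setU1; case: (eqVneq z y) => [->|zy] //=.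
apply/idP/idP=> [zY|/(subsetP sXY)//]; apply: contraT => zX.
have : z \in Y :\: X by rewrite inE zX zY.
by rewrite YXy inE (negbTE zy).
Qed.

Lemma even_card_partner (T : finType) (partner : T -> T -> Prop) (S : {set T}) :
  (forall s t, partner s t -> partner t s) ->
  {in S, forall s, exists t, [/\ t \in S, t != s, partner s t &
     {in S, forall t', t' != s -> partner s t' -> t' = t}]} ->
  ~~ odd #|S|.
Proof.
move=> partner_sym; move: {2}#|S| (leqnn #|S|) => N.
elim: N S => [|N IH] S cardS pairS; first by move: cardS; rewrite leqn0 => /eqP->.
have [->|[s sS]] := set_0Vmem S; first by rewrite cards0.
have [t [tS ts st t_uniq]] := pairS s sS.
have tSs : t \in S :\ s by rewrite !inE ts.
have cardS2 : #|S| = (#|S :\ s :\ t|).+2.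
  by rewrite (cardsD1 s S) sS (cardsD1 t (S :\ s)) tSs.
rewrite cardS2 /= negbK; apply: IH => [|u].
  by move: cardS; rewrite cardS2 ltnS => /ltnW.
rewrite !inE => /and3P[ut us uS].
have [v [vS vu uv v_uniq]] := pairS u uS.
exists v; split=> //; last by move=> t' /setD1P[_ /setD1P[_ t'S]]; apply: v_uniq.
rewrite !inE vS andbT; apply/andP; split; apply/eqP => ev; subst v.
- have [w [_ _ _ w_uniq]] := pairS t tS.
  have uw := w_uniq u uS ut (partner_sym _ _ uv).
  have sw := w_uniq s sS (ltac:(by rewrite eq_sym)) (partner_sym _ _ st).
  by move: us; rewrite uw -sw eqxx.
- by move: ut; rewrite (t_uniq u uS us (partner_sym _ _ uv)) eqxx.
Qed.

(** * Ordinal bases *)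

Section OrdinalBasis.
Variables (m : nat) (C : finType) (c : 'I_m -> C -> nat) (slack : 'I_m -> C).
Hypotheses (c_inj : forall i, injective (c i)) (slack_inj : injective slack)
  (slack_worst : forall i x, x != slack i -> c i (slack i) < c i x)
  (slack_best : forall i j x, j != i -> (forall r, x != slack r) ->
     c i x < c i (slack j)).

Definition row_lb i (X : {set C}) z := [forall j in X, c i z <= c i j].
Definition row_min i (X : {set C}) j := (j \in X) && row_lb i X j.
Definition ordinal_basis (O : {set C}) :=
  #|O| = m /\ forall z, exists i, row_lb i O z.
Definition slack_but r := slack @: [set~ r].

Lemma row_lbP i (X : {set C}) z :
  reflect {in X, forall j, c i z <= c i j} (row_lb i X z).
Proof. exact: forall_inP. Qed.

Arguments row_lbP {i X z}.

Lemma row_lbPn i (X : {set C}) z :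
  reflect (exists2 j, j \in X & c i j < c i z) (~~ row_lb i X z).
Proof.
by apply: (iffP forall_inPn) => -[j jX lt]; exists j; rewrite // ?ltnNge in lt *.
Qed.

Arguments row_lbPn {i X z}.

Lemma row_min_uniq i (X : {set C}) j1 j2 : row_min i X j1 -> row_min i X j2 -> j1 = j2.
Proof.
move=> /andP[j1X /row_lbP min1] /andP[j2X /row_lbP min2].
by apply: (@c_inj i); apply/eqP; rewrite eqn_leq min1 // min2.
Qed.

Lemma row_min_exists i (X : {set C}) x : x \in X -> exists j, row_min i X j.
Proof.
case/(arg_minnP (c i)) => j jX jmin.
by exists j; apply/andP; split=> //; apply/row_lbP.
Qed.

Lemma ordinal_basis_row_min_inj O j i1 i2 : ordinal_basis O ->
  row_min i1 O j -> row_min i2 O j -> i1 = i2.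
Proof.
move=> [cardO domO] min1 min2; have /andP[jO _] := min1.
pose f i := [arg min_(x < j in O) c i x].
have f_min i : row_min i O (f i).
  by rewrite /f; case: arg_minnP => // x xO xmin; rewrite /row_min xO; apply/row_lbP.
have imf : f @: [set: 'I_m] = O.
  apply/setP=> x; apply/imsetP/idP => [[i _ ->]|xO]; first by case/andP: (f_min i).
  have [i ilb] := domO x; exists i => //.
  by apply: (row_min_uniq (i := i) (X := O)); rewrite // /row_min xO.
have /imset_injP f_inj : #|f @: [set: 'I_m]| == #|[set: 'I_m]|.
  by rewrite imf cardO cardsT card_ord.
apply: f_inj; rewrite ?inE //.
by rewrite (row_min_uniq (f_min i1) min1) (row_min_uniq (f_min i2) min2).
Qed.

Lemma ordinal_basis_below O z r i : ordinal_basis O -> row_min r O z -> i != r ->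
  exists2 j, j \in O & c i j < c i z.
Proof.
move=> basisO zmin ir; apply/row_lbPn; apply: contra ir => zlb.
have /andP[zO _] := zmin.
by apply/eqP; apply: (ordinal_basis_row_min_inj basisO _ zmin); rewrite /row_min zO.
Qed.

Lemma dominating_row (X Y : {set C}) z i : X \subset Y ->
  (exists i', row_lb i' Y z) ->
  (forall i', i' != i -> exists2 j, j \in X & c i' j < c i' z) -> row_lb i Y z.
Proof.
move=> sXY [i' zlb] below; case: (eqVneq i' i) => [<- //|i'i].
have [j jX ltj] := below i' i'i.
by move/row_lbP/(_ j (subsetP sXY j jX)): zlb; rewrite leqNgt ltj.
Qed.

Lemma card_slack_but r : #|slack_but r| = m.-1.
Proof. by rewrite card_imset // cardsC1 card_ord. Qed.

Section OrdinalPivot.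
Variables (O : {set C}) (k : C).
Hypotheses (basisO : ordinal_basis O) (kO : k \in O)
  (Ok_slacks : forall r, O :\ k != slack_but r).

Lemma card_basis_setD1 : #|O :\ k| = m.-1.
Proof. by rewrite -basisO.1 (cardsD1 k O) kO. Qed.

Lemma card_ordinal_pivot z : z \notin O :\ k -> #|z |: O :\ k| = m.
Proof. by move=> zOk; rewrite cardsU1 zOk -basisO.1 (cardsD1 k O) kO. Qed.

(* Removing [k] from [O] leaves row [i0], where [k] was minimal, with the new
   minimum [j'], which was already the minimum of some other row [i1]. The
   column replacing [k] is the [i1]-best one lying above [O :\ k] in every row
   but [i1]; slack [i1] is such a column unless [O :\ k] consists of slacks. *)
Section PivotRows.
Variables (i0 i1 : 'I_m) (j' : C).
Hypotheses (k_min : row_min i0 O k) (j'_min0 : row_min i0 (O :\ k) j')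
  (j'_min1 : row_min i1 O j').

Let j'Ok : j' \in O :\ k. Proof. by case/andP: j'_min0. Qed.

Lemma pivot_rows_neq : i1 != i0.
Proof.
apply: contraTneq j'Ok => ei; have := j'_min1; rewrite ei => min1.
by rewrite (row_min_uniq min1 k_min) setD11.
Qed.

Definition entering z := [forall (i | i != i1), ~~ row_lb i (O :\ k) z].

Lemma enteringP z i : entering z -> i != i1 ->
  exists2 j, j \in O :\ k & c i j < c i z.
Proof. by move/forall_inP/(_ i) => ent /ent/row_lbPn. Qed.

Lemma entering_slack : entering (slack i1).
Proof.
apply/forall_inP => i ii1; apply: contra (Ok_slacks i) => slb.
have sub : O :\ k \subset slack_but i.
  apply/subsetP => j jOk; move: (row_lbP slb j jOk).
  have [r /eqP ->|nslack] := pickP (fun r => j == slack r); last first.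
    by rewrite leqNgt slack_best 1?eq_sym // => r; rewrite nslack.
  move=> le; apply: imset_f; rewrite !inE; apply: contraTneq le => ->.
  by rewrite -ltnNge slack_worst // (inj_eq slack_inj) eq_sym.
by rewrite eqEcard sub card_slack_but card_basis_setD1 /=.
Qed.

Lemma entering_lt z : entering z -> z \notin O /\ c i1 z < c i1 j'.
Proof.
move=> ent.
have zlb : row_lb i1 O z.
  apply: (dominating_row (subsetDl O [set k]) (basisO.2 z)) => i.
  exact: enteringP.
have zj' : z != j'.
  apply: contraTneq ent => ->; apply/forall_inPn; exists i0.
    by rewrite unfold_in /= eq_sym pivot_rows_neq.
  by case/andP: j'_min0 => _ ->.
have lt : c i1 z < c i1 j'.
  by rewrite ltn_neqAle (inj_eq (@c_inj i1)) zj' (row_lbP zlb) //; case/andP: j'_min1.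
split=> //; apply: contraTN lt => zO.
by case/andP: j'_min1 => _ /row_lbP/(_ z zO); rewrite leqNgt.
Qed.

Definition pivot_in := [arg max_(z > slack i1 | entering z) c i1 z].

Lemma pivot_in_entering : entering pivot_in.
Proof.
by rewrite /pivot_in; case: arg_maxnP => [|z ent _ //]; exact: entering_slack.
Qed.

Lemma pivot_in_max z : entering z -> c i1 z <= c i1 pivot_in.
Proof.
rewrite /pivot_in; case: arg_maxnP => [|k' _ k'max]; first exact: entering_slack.
exact: k'max.
Qed.

Lemma ordinal_basis_pivot : ordinal_basis (pivot_in |: O :\ k).
Proof.
have [k'O k'lt] := entering_lt pivot_in_entering.
split; first by apply: card_ordinal_pivot; apply: contra k'O; case/setD1P.
move=> z; have [ent|] := boolP (entering z).
  exists i1; apply/row_lbP => j; rewrite in_setU1 => /predU1P[->|jOk].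
    exact: pivot_in_max.
  have [_ /row_lbP j'lb] := andP j'_min1.
  apply: leq_trans (pivot_in_max ent) (ltnW (leq_trans k'lt (j'lb j _))).
  by case/setD1P: jOk.
case/forall_inPn => i ii1 /negbNE zlb; exists i.
apply/row_lbP => j; rewrite in_setU1 => /predU1P[->|jOk]; last exact: row_lbP zlb j jOk.
have [j0 j0Ok lt] := enteringP pivot_in_entering ii1.
exact: ltnW (leq_ltn_trans (row_lbP zlb j0 j0Ok) lt).
Qed.

Lemma pivot_row z : ordinal_basis (z |: O :\ k) -> z \notin O :\ k ->
  exists2 r, (r == i0) || (r == i1) & row_min r (z |: O :\ k) z.
Proof.
move=> basisZ zOk.
have zZ : z \in z |: O :\ k by rewrite setU11.
have [_ /row_lbP j'lb0] := andP j'_min0; have [_ /row_lbP j'lb1] := andP j'_min1.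
have [lt0|ge0] := ltnP (c i0 z) (c i0 j').
  exists i0; rewrite ?eqxx // /row_min zZ; apply/row_lbP => j.
  by rewrite in_setU1 => /predU1P[->//|jOk]; exact: ltnW (leq_trans lt0 (j'lb0 j jOk)).
have [lt1|ge1] := ltnP (c i1 z) (c i1 j').
  exists i1; rewrite ?eqxx ?orbT // /row_min zZ; apply/row_lbP => j.
  rewrite in_setU1 => /predU1P[->//|jOk].
  by apply: ltnW (leq_trans lt1 (j'lb1 j _)); case/setD1P: jOk.
have j'Z : j' \in z |: O :\ k by rewrite in_setU1 j'Ok orbT.
have min_j' i : c i j' <= c i z -> {in O :\ k, forall j, c i j' <= c i j} ->
    row_min i (z |: O :\ k) j'.
  move=> le lb; rewrite /row_min j'Z; apply/row_lbP => j.
  by rewrite in_setU1 => /predU1P[->//|]; apply: lb.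
have := ordinal_basis_row_min_inj basisZ (min_j' i0 ge0 j'lb0).
move/(_ i1 (min_j' i1 ge1 (fun j jOk => j'lb1 j (subsetP (subsetDl O [set k]) j jOk)))).
by move=> ei; move: pivot_rows_neq; rewrite ei eqxx.
Qed.

Lemma ordinal_pivot_unique z : ordinal_basis (z |: O :\ k) ->
  z = k \/ z = pivot_in.
Proof.
move=> basisZ.
have zOk : z \notin O :\ k.
  have m0 : 0 < m by rewrite -basisO.1; apply/card_gt0P; exists k.
  by apply/negP => zOk; move: basisZ.1; rewrite cardsU1 zOk card_basis_setD1; lia.
have [r r01 zmin] := pivot_row basisZ zOk.
have below i : i != r -> exists2 j, j \in O :\ k & c i j < c i z.
  move=> ir; have [j] := ordinal_basis_below basisZ zmin ir.
  rewrite in_setU1 => /predU1P[->|jOk lt]; [by rewrite ltnn|by exists j].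
have subZ : O :\ k \subset z |: O :\ k by apply: subsetUr.
case/orP: r01 => /eqP er; subst r; [left|right].
- have /row_lbP zlb := dominating_row (subsetDl O [set k]) (basisO.2 z) below.
  have klb : row_lb i0 (z |: O :\ k) k.
    apply: dominating_row subZ (basisZ.2 k) _ => i ii0.
    have [j jO lt] := ordinal_basis_below basisO k_min ii0.
    by exists j => //; rewrite !inE jO andbT; apply: contraTneq lt => ->; rewrite ltnn.
  apply: (@c_inj i0); apply/eqP; rewrite eqn_leq zlb //.
  by rewrite (row_lbP klb) ?setU11.
- have ent : entering z by apply/forall_inP => i /below/row_lbPn.
  have k'lb : row_lb i1 (z |: O :\ k) pivot_in.
    apply: dominating_row subZ (basisZ.2 _) _ => i.
    exact: enteringP pivot_in_entering.
  apply: (@c_inj i1); apply/eqP; rewrite eqn_leq pivot_in_max //.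
  by rewrite (row_lbP k'lb) ?setU11.
Qed.

End PivotRows.

Lemma ordinal_pivot : exists k', [/\ k' \notin O, ordinal_basis (k' |: O :\ k) &
  forall z, ordinal_basis (z |: O :\ k) -> z = k \/ z = k'].
Proof.
have [cardO domO] := basisO.
have [i0 k_min] : exists i0, row_min i0 O k.
  by have [i klb] := domO k; exists i; rewrite /row_min kO.
have [x xOk] : exists x, x \in O :\ k.
  apply/set0Pn; apply: contra (Ok_slacks i0) => /eqP Ok0.
  by rewrite Ok0 eq_sym -cards_eq0 card_slack_but -card_basis_setD1 Ok0 cards0.
have [j' j'_min0] := row_min_exists i0 xOk.
have [i1 j'_min1] : exists i1, row_min i1 O j'.
  have /andP[/setD1P[_ j'O] _] := j'_min0.
  by have [i j'lb] := domO j'; exists i; rewrite /row_min j'O.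
exists (pivot_in i1); split.
- exact: (entering_lt k_min j'_min0 j'_min1 (pivot_in_entering i1)).1.
- exact: ordinal_basis_pivot k_min j'_min0 j'_min1.
- exact: ordinal_pivot_unique k_min j'_min0 j'_min1.
Qed.

End OrdinalPivot.

End OrdinalBasis.

Arguments row_lbP {m C c i X z}.
Arguments row_lbPn {m C c i X z}.

(** * Lexicographically feasible bases *)

Local Open Scope ring_scope.

Lemma ex_minimal (T : finType) (P : pred T) (lt : T -> T -> Prop) x0 :
  P x0 -> (forall x y z, lt x y -> lt y z -> lt x z) -> (forall x, ~ lt x x) ->
  exists2 x, P x & forall y, P y -> ~ lt y x.
Proof.
move=> Px0 trans_lt irr_lt.
pose below x := [set y | P y && `[< lt y x >]].
case: (arg_minnP (fun x => #|below x|) Px0) => x Px xmin.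
exists x => // y Py ltyx; have := xmin y Py; apply/negP; rewrite -ltnNge.
apply: proper_card; apply/properP; split.
  apply/subsetP => z; rewrite !inE => /andP[-> /asboolP ltzy].
  by apply/asboolP; apply: trans_lt _ _ _ ltzy ltyx.
by exists y; rewrite !inE Py /=; apply/asboolP.
Qed.

Lemma sum_delta (R : pzSemiRingType) (T : finType) (f : T -> R) j :
  \sum_l (l == j)%:R * f l = f j.
Proof.
rewrite (bigD1 j) //= eqxx mul1r big1 ?addr0 // => l /negbTE ->.
by rewrite mul0r.
Qed.

Section LexPositive.
Variables (R : realFieldType) (m : nat).
Implicit Types f g : 'I_m.+1 -> R.

Definition lex_pos f :=
  exists t, 0 < f t /\ forall t' : 'I_m.+1, (t' < t)%N -> f t' = 0.

Lemma eq_lex_pos f g : f =1 g -> lex_pos f -> lex_pos g.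
Proof.
by move=> fg [t [ft0 ft']]; exists t; rewrite -fg; split=> // t' /ft'; rewrite fg.
Qed.

Lemma lex_posD f g : lex_pos f -> lex_pos g -> lex_pos (fun t => f t + g t).
Proof.
move=> [t1 [f1 f0]] [t2 [g2 g0]].
case: (ltngtP t1 t2) => [lt12|lt21|/val_inj e12].
- exists t1; rewrite g0 // addr0; split=> // t' lt'.
  by rewrite f0 // g0 ?addr0 // (ltn_trans lt' lt12).
- exists t2; rewrite f0 // add0r; split=> // t' lt'.
  by rewrite g0 // f0 ?addr0 // (ltn_trans lt' lt21).
- subst t2; exists t1; split; first exact: addr_gt0.
  by move=> t' lt'; rewrite f0 // g0 // addr0.
Qed.

Lemma lex_posZ a f : 0 < a -> lex_pos f -> lex_pos (fun t => a * f t).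
Proof.
move=> a0 [t [ft0 ft']]; exists t; split; first exact: mulr_gt0.
by move=> t' /ft' ->; rewrite mulr0.
Qed.

Lemma lex_posN f : lex_pos f -> ~ lex_pos (fun t => - f t).
Proof.
move=> [t1 [f1 f0]] [t2 [g2 g0]].
case: (ltngtP t1 t2) => [lt12|lt21|/val_inj e12].
- by move: (g0 _ lt12) f1 => /eqP; rewrite oppr_eq0 => /eqP ->; rewrite ltxx.
- by move: g2; rewrite f0 // oppr0 ltxx.
- by subst t2; move: g2; rewrite oppr_gt0 ltNge (ltW f1).
Qed.

Lemma lex_pos_ge0 f : lex_pos f -> 0 <= f ord0.
Proof.
move=> [t [ft0 ft']]; case: (posnP t) => [t0|tpos]; last by rewrite ft'.
by rewrite (_ : ord0 = t) ?ltW //; apply: val_inj; rewrite /= t0.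
Qed.

Lemma lex_pos_total f : (exists t, f t != 0) ->
  lex_pos f \/ lex_pos (fun t => - f t).
Proof.
move=> [t ft]; have : exists n, (n < m.+1)%N && (f (inord n) != 0).
  by exists t; rewrite ltn_ord inord_val ft.
case/ex_minnP => n /andP[nm fn] nmin.
have f0 (t' : 'I_m.+1) : (t' < (inord n : 'I_m.+1))%N -> f t' = 0.
  rewrite inordK // => lt'; apply/eqP; apply: contraTT lt' => ft'.
  by rewrite -leqNgt nmin // ltn_ord inord_val.
case: (ltgtP (f (inord n)) 0) => [neg|pos|e]; last by case/eqP: fn.
- by right; exists (inord n); rewrite oppr_gt0; split=> // t' /f0 ->; rewrite oppr0.
- by left; exists (inord n); split=> // t' /f0.
Qed.

End LexPositive.

Section LexBasis.
Variables (R : realFieldType) (m : nat) (C : finType) (A : 'I_m -> C -> R)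
  (b : 'I_m -> R).
Hypotheses (A_ge0 : forall r j, 0 <= A r j)
  (A_col_neq0 : forall j, exists r, A r j != 0).

Definition rhs (t : 'I_m.+1) (r : 'I_m) : R :=
  if t == ord0 then b r else (t == lift ord0 r)%:R.

(* Lexicographic perturbation: [F] is feasible for the right-hand side
   [b + eps e_0 + eps^2 e_1 + ...] for all small [eps > 0]. Row [t] of [L]
   solves [A x = rhs t] on [F]; feasibility asks each basic column to have a
   lex-positive vector of coefficients, which makes every pivot unique. *)
Definition lex_solution (F : {set C}) (L : 'I_m.+1 -> C -> R) :=
  (forall t l, l \notin F -> L t l = 0) /\
  (forall t r, \sum_l L t l * A r l = rhs t r).

Definition col_indep (F : {set C}) := forall mu : C -> R,
  (forall l, l \notin F -> mu l = 0) -> (forall r, \sum_l mu l * A r l = 0) ->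
  forall l, mu l = 0.

Definition lex_feasible (F : {set C}) := [/\ #|F| = m, col_indep F &
  exists2 L, lex_solution F L & {in F, forall l, lex_pos (L^~ l)}].

(* Coordinates of column [k] of [A] in the basis solved by [L], whose rows
   [L (lift ord0 r)] solve [A x = e_r]. *)
Definition coord (L : 'I_m.+1 -> C -> R) k l := \sum_r A r k * L (lift ord0 r) l.

Lemma rhs_lift r r' : rhs (lift ord0 r) r' = (r' == r)%:R.
Proof.
rewrite /rhs eq_sym (negbTE (neq_lift _ _)).
by rewrite (inj_eq (@lift_inj _ ord0)) eq_sym.
Qed.

Section Coordinates.
Variables (F : {set C}) (L : 'I_m.+1 -> C -> R).
Hypothesis solL : lex_solution F L.

Lemma coord_sum k r : \sum_l coord L k l * A r l = A r k.
Proof.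
rewrite /coord; under eq_bigr => l _ do rewrite mulr_suml.
rewrite exchange_big /=; under eq_bigr => r' _ do
  (under eq_bigr => l _ do rewrite -mulrA; rewrite -mulr_sumr solL.2 rhs_lift).
by under eq_bigr => r' _ do rewrite mulrC eq_sym; rewrite sum_delta.
Qed.

Lemma coord_out k l : l \notin F -> coord L k l = 0.
Proof. by move=> lF; rewrite /coord big1 // => r _; rewrite solL.1 // mulr0. Qed.

Lemma sum_exchange_dir k r : \sum_x ((x == k)%:R - coord L k x) * A r x = 0.
Proof.
under eq_bigr => x _ do rewrite mulrBl.
by rewrite sumrB sum_delta coord_sum subrr.
Qed.

Lemma coord_basis j l : col_indep F -> j \in F -> coord L j l = (l == j)%:R.
Proof.
move=> indepF jF; apply/eqP; rewrite -subr_eq0; apply/eqP; move: l.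
apply: indepF => [l lF|r].
  rewrite coord_out //; have [ej|_] := eqVneq l j; last by rewrite subrr.
  by rewrite ej jF in lF.
by under eq_bigr => x _ do rewrite mulrBl; rewrite sumrB coord_sum sum_delta subrr.
Qed.

End Coordinates.

Section LexPivot.
Variables (F : {set C}) (L : 'I_m.+1 -> C -> R) (k : C).
Hypotheses (indepF : col_indep F) (solL : lex_solution F L)
  (posL : {in F, forall l, lex_pos (L^~ l)}) (kF : k \notin F).

Let coord_kk : coord L k k = 0. Proof. by rewrite (coord_out solL). Qed.

Definition ratio_test l := 0 < coord L k l /\ {in F, forall l', l' != l ->
  lex_pos (fun t => L t l' - coord L k l' / coord L k l * L t l)}.

Definition pivot_sol l t x :=
  L t x + L t l / coord L k l * ((x == k)%:R - coord L k x).

Lemma ratio_test_uniq l1 l2 : l1 \in F -> l2 \in F ->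
  ratio_test l1 -> ratio_test l2 -> l1 = l2.
Proof.
move=> l1F l2F [c1 rt1] [c2 rt2]; have [//|l12] := eqVneq l1 l2.
have ic1 : 0 < (coord L k l1)^-1 by rewrite invr_gt0.
have ic2 : 0 < (coord L k l2)^-1 by rewrite invr_gt0.
have q1 := lex_posZ ic2 (rt1 l2 l2F (contra_neq esym l12)).
have q2 := lex_posZ ic1 (rt2 l1 l1F l12).
have [] := lex_posN q1; apply: eq_lex_pos q2 => t.
by field; rewrite !gt_eqF.
Qed.

Lemma ratio_test_of_feasible l : l \in F -> lex_feasible (k |: F :\ l) ->
  ratio_test l.
Proof.
move=> lF [_ _ [L' solL' posL']].
have lk : l != k by apply: contraNneq kF => <-.
have lF' : l \notin k |: F :\ l by rewrite !inE eqxx (negbTE lk).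
have kF' : k \in k |: F :\ l by rewrite setU11.
have change t x : L t x - L' t x + L' t k * ((x == k)%:R - coord L k x) = 0.
  move: x; apply: indepF => [x xF|r].
    have [->|xk] := eqVneq x k.
      by rewrite coord_kk solL.1 // subr0 mulr1 sub0r addNr.
    have xF' : x \notin k |: F :\ l by rewrite !inE (negbTE xk) (negbTE xF) andbF.
    by rewrite (coord_out solL) // solL.1 // solL'.1 // !subrr mulr0 addr0.
  under eq_bigr => x _ do rewrite mulrDl mulrBl -mulrA.
  rewrite big_split sumrB /= solL.2 solL'.2 -mulr_sumr (sum_exchange_dir solL).
  by rewrite mulr0 subrr addr0.
have Ll t : L t l = coord L k l * L' t k.
  move/eqP: (change t l); rewrite solL'.1 // (negbTE lk) subr0 sub0r mulrN.
  by rewrite subr_eq0 mulrC => /eqP.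
have coord_pos : 0 < coord L k l.
  case: (ltgtP 0 (coord L k l)) => [//|neg|e].
    have [] := lex_posN (posL lF); apply: eq_lex_pos (lex_posZ _ (posL' k kF')).
      by move=> t; rewrite Ll -mulNr.
    by rewrite oppr_gt0.
  by case: (posL lF) => t []; rewrite Ll -e mul0r ltxx.
split=> // l' l'F l'l.
have l'k : l' != k by apply: contraNneq kF => <-.
have l'F' : l' \in k |: F :\ l by rewrite !inE l'l l'F orbT.
apply: eq_lex_pos (posL' l' l'F') => t.
move/eqP: (change t l'); rewrite (negbTE l'k) sub0r addrAC subr_eq0 => /eqP <-.
by rewrite Ll; field; rewrite gt_eqF.
Qed.

Lemma lex_feasible_pivot l : #|F| = m -> l \in F -> ratio_test l ->
  lex_feasible (k |: F :\ l).
Proof.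
move=> cardF lF [coord_pos rt].
have lk : l != k by apply: contraNneq kF => <-.
have coord_neq0 : coord L k l != 0 by rewrite gt_eqF.
have lF' : l \notin k |: F :\ l by rewrite !inE eqxx (negbTE lk).
split.
- by rewrite cardsU1 !inE (negbTE kF) andbF -cardF (cardsD1 l F) lF.
- move=> mu mu0 mu_sum.
  have change x : mu x - mu k * ((x == k)%:R - coord L k x) = 0.
    move: x; apply: indepF => [x xF|r].
      have [->|xk] := eqVneq x k; first by rewrite coord_kk subr0 mulr1 subrr.
      have xF' : x \notin k |: F :\ l by rewrite !inE (negbTE xk) (negbTE xF) andbF.
      by rewrite (coord_out solL) // mu0 // subrr mulr0 subrr.
    under eq_bigr => x _ do rewrite mulrBl -mulrA.
    by rewrite sumrB mu_sum -mulr_sumr (sum_exchange_dir solL) mulr0 subrr.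
  have muk : mu k = 0.
    move/eqP: (change l); rewrite mu0 // (negbTE lk) sub0r sub0r mulrN opprK.
    by rewrite mulf_eq0 (negbTE coord_neq0) orbF => /eqP.
  by move=> x; move: (change x); rewrite muk mul0r subr0.
exists (pivot_sol l).
  split=> [t x|t r].
    rewrite !inE negb_or negb_and negbK => /andP[xk /orP[/eqP ->|xF]].
      by rewrite /pivot_sol (negbTE lk) sub0r; field.
    by rewrite /pivot_sol (negbTE xk) (coord_out solL k xF) solL.1 // subrr mulr0 addr0.
  under eq_bigr => x _ do rewrite mulrDl -mulrA.
  by rewrite big_split /= solL.2 -mulr_sumr (sum_exchange_dir solL) mulr0 addr0.
move=> x; rewrite !inE => /orP[/eqP ->|/andP[xl xF]].
  have ic : 0 < (coord L k l)^-1 by rewrite invr_gt0.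
  apply: eq_lex_pos (lex_posZ ic (posL lF)) => t.
  by rewrite /pivot_sol eqxx coord_kk (solL.1 t k kF) subr0 mulr1 add0r mulrC.
have xk : x != k by apply: contraNneq kF => <-.
apply: eq_lex_pos (rt x xF xl) => t.
by rewrite /pivot_sol (negbTE xk) sub0r; field.
Qed.

Lemma coord_pos_exists : exists2 l, l \in F & 0 < coord L k l.
Proof.
apply/exists_inP; apply: contraT; rewrite negb_exists_in => /forall_inP coord_le0.
have [r Ark] := A_col_neq0 k.
suff : A r k <= 0 by rewrite le_eqVlt (negbTE Ark) ltNge A_ge0.
rewrite -(coord_sum solL k r); apply: sumr_le0 => l _.
have [lF|lF] := boolP (l \in F); last by rewrite (coord_out solL) // mul0r.
by apply: mulr_le0_ge0 => //; rewrite leNgt coord_le0.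
Qed.

Lemma ratio_rows_neq l l' : l \in F -> l' != l ->
  coord L k l != 0 -> coord L k l' != 0 ->
  exists t, L t l' / coord L k l' - L t l / coord L k l != 0.
Proof.
move=> lF l'l cl cl'; apply: contrapT => /forallNP rows_eq.
have Ll' t : L t l' = coord L k l' / coord L k l * L t l.
  move/negP/negbNE: (rows_eq t); rewrite subr_eq0 => /eqP e.
  by rewrite -[LHS](divfK cl') e; field.
move: (coord_basis solL l' indepF lF); rewrite (negbTE l'l) /coord.
under eq_bigr => r _ do rewrite Ll' mulrCA.
rewrite -mulr_sumr -/(coord L l l) (coord_basis solL l indepF lF) eqxx mulr1.
by move/eqP; rewrite mulf_eq0 invr_eq0 (negbTE cl) (negbTE cl').
Qed.

Lemma ratio_test_exists : exists2 l, l \in F & ratio_test l.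
Proof.
have [l0 l0F c0] := coord_pos_exists.
pose ratio_row l t := L t l / coord L k l.
pose ratio_lt l1 l2 := lex_pos (fun t => ratio_row l2 t - ratio_row l1 t).
have [l /andP[lF cl] lmin] : exists2 l, (l \in F) && (0 < coord L k l) &
    forall l', (l' \in F) && (0 < coord L k l') -> ~ ratio_lt l' l.
  apply: (ex_minimal (x0 := l0)) => [|l1 l2 l3 lt12 lt23|l1 [t []]].
  - by rewrite l0F c0.
  - by apply: eq_lex_pos (lex_posD lt23 lt12) => t; rewrite addrA subrK.
  - by rewrite subrr ltxx.
exists l => //; split=> // l' l'F l'l.
have cl0 : coord L k l != 0 by rewrite gt_eqF.
case: (ltgtP (coord L k l') 0) => [neg|pos|e].
- have c'0 : 0 < - (coord L k l' / coord L k l).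
    by rewrite oppr_gt0 pmulr_llt0 ?invr_gt0.
  apply: eq_lex_pos (lex_posD (posL l'F) (lex_posZ c'0 (posL lF))) => t.
  by rewrite mulNr.
- have [|lt_l'l|lt_ll'] := lex_pos_total (f := fun t => ratio_row l' t - ratio_row l t).
  + by apply: ratio_rows_neq; rewrite // gt_eqF.
  + apply: eq_lex_pos (lex_posZ pos lt_l'l) => t.
    by rewrite /ratio_row; field; rewrite cl0 gt_eqF.
  + have [] := lmin l'; first by rewrite l'F pos.
    by apply: eq_lex_pos lt_ll' => t; rewrite opprB.
- by apply: eq_lex_pos (posL l'F) => t; rewrite e mul0r mul0r subr0.
Qed.

End LexPivot.

Lemma lex_feasible_slacks (slack : 'I_m -> C) : injective slack ->
  (forall r i, A r (slack i) = (r == i)%:R) -> (forall r, 0 < b r) ->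
  lex_feasible (slack @: setT).
Proof.
move=> slack_inj A_slack b_pos.
have sum_slacks (f : C -> R) r : {in [predC slack @: setT], f =1 fun=> 0} ->
    \sum_l f l * A r l = f (slack r).
  move=> f0; rewrite (bigID (mem (slack @: setT))) /= [X in _ + X]big1 ?addr0.
    2: by move=> l lS; rewrite f0 ?mul0r // inE.
  rewrite big_imset /=; last by move=> x y _ _; apply: slack_inj.
  under eq_bigr => i _ do rewrite A_slack mulrC eq_sym.
  by rewrite (eq_bigl xpredT) ?sum_delta // => i; rewrite inE.
split; first by rewrite card_imset // cardsT card_ord.
  move=> mu mu0 mu_sum l; have [/imsetP[i _ ->]|] := boolP (l \in slack @: setT).
    by rewrite -(sum_slacks mu i) // => x; rewrite inE => /mu0.
  exact: mu0.
pose L t l := \sum_i (l == slack i)%:R * rhs t i.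
have L_slack t i : L t (slack i) = rhs t i.
  rewrite /L; under eq_bigr => i' _ do rewrite (inj_eq slack_inj) eq_sym.
  by rewrite sum_delta.
have L0 t l : l \notin slack @: setT -> L t l = 0.
  move=> lS; rewrite /L big1 // => i _; rewrite (_ : l == slack i = false) ?mul0r //.
  by apply/negbTE; apply: contraNneq lS => ->; apply: imset_f.
exists L.
  by split=> // t r; rewrite (sum_slacks (L t)) // => l; rewrite inE => /L0.
move=> l /imsetP[i _ ->]; exists ord0; split=> //.
by rewrite L_slack /rhs eqxx.
Qed.

End LexBasis.

(** * Scarf's lemma *)

Section Scarf.
Variables (R : realFieldType) (m : nat) (C : finType) (A : 'I_m -> C -> R)
  (b : 'I_m -> R) (slack : 'I_m -> C) (c : 'I_m -> C -> nat).
Hypotheses (A_ge0 : forall r j, 0 <= A r j)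
  (A_col_neq0 : forall j, exists r, A r j != 0)
  (A_slack : forall r i, A r (slack i) = (r == i)%:R) (b_pos : forall r, 0 < b r)
  (c_inj : forall i, injective (c i))
  (slack_worst : forall i x, x != slack i -> (c i (slack i) < c i x)%N)
  (slack_best : forall i j x, j != i -> (forall r, x != slack r) ->
     (c i x < c i (slack j))%N).

Lemma slack_inj : injective slack.
Proof.
move=> i1 i2 e; apply/eqP; apply: contraT => i12.
move: (A_slack i1 i2); rewrite -e A_slack eqxx (negbTE i12) => /eqP.
by rewrite oner_eq0.
Qed.

Definition scarf_basis F := lex_feasible A b F /\ ordinal_basis c F.

Let slacks := slack @: [set: 'I_m].

Section Parity.
Variable i0 : 'I_m.
Let s0 := slack i0.

Let slack_but_i0 : slack_but slack i0 = slacks :\ s0.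
Proof.
apply/setP => z; rewrite !inE; apply/imsetP/andP => [[j ji0 ->]|[zs0 /imsetP[j _ zj]]].
  by rewrite (inj_eq slack_inj) -in_setC1 imset_f.
by subst z; exists j => //; rewrite !inE -(inj_eq slack_inj).
Qed.

Definition scarf_state (s : {set C} * {set C}) := [/\ lex_feasible A b s.1,
  ordinal_basis c s.2, s0 \in s.1, s0 \notin s.2 & s.1 :\ s0 \subset s.2].

Definition states := [set s | `[< scarf_state s >]].
Definition initial_states := [set s in states | s.1 == slacks].

Lemma in_noninitial_states s : (s \in states :\: initial_states) =
  `[< scarf_state s >] && (s.1 != slacks).
Proof. by rewrite !inE; case: `[< _ >]; rewrite ?andbT. Qed.

Lemma scarf_state_shape F O : scarf_state (F, O) ->
  exists2 k, k \notin F & O = k |: F :\ s0.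
Proof.
move=> [[cardF _ _] [cardO _] /= s0F s0O sub].
have cardO' : #|O| = #|F :\ s0|.+1 by rewrite cardO -cardF (cardsD1 s0 F) s0F.
have [k kFs0 eO] := subset_card_succ sub cardO'; exists k => //.
apply: contra kFs0 => kF; rewrite !inE kF andbT.
by apply: contraNneq s0O => <-; rewrite eO setU11.
Qed.

Lemma states_feasible_partner s : s \in states ->
  (exists F, scarf_basis F) \/ exists t, [/\ t \in states, t != s, s.2 = t.2 &
     {in states, forall t', t' != s -> s.2 = t'.2 -> t' = t}].
Proof.
case: s => F O; rewrite inE => /asboolP st.
have [k kF eO] := scarf_state_shape st.
case: st => /= feasF basisO s0F s0O _; have [cardF indepF [L solL posL]] := feasF.
have [l lF rt] := ratio_test_exists A_ge0 A_col_neq0 k indepF solL posL.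
have feasF' := lex_feasible_pivot indepF solL posL kF cardF lF rt.
have [ls0|ls0] := eqVneq l s0; [left; exists O | right; exists (k |: F :\ l, O)].
  by split=> //; rewrite eO -ls0.
split=> //=.
- rewrite inE; apply/asboolP; split=> //=.
    by rewrite !inE s0F (eq_sym s0 l) ls0 orbT.
  apply/subsetP => x; rewrite eO !inE => /andP[xs0 /orP[->//|/andP[_ xF]]].
  by rewrite xs0 xF orbT.
- by apply/negP => /eqP[eF]; move: kF; rewrite -eF setU11.
move=> [F'' O''] /[1!inE] /asboolP[/= feasF'' _ _ _ sub''] ne /= eO''; subst O''.
have sub : F'' \subset k |: F.
  apply/subsetP => x xF''; have [->|xs0] := eqVneq x s0; first by rewrite setU1r.
  have : x \in O by apply: (subsetP sub''); rewrite !inE xs0.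
  by rewrite eO !inE => /orP[->|/andP[_ ->]]; rewrite ?orbT.
have cardFk : #|k |: F| = #|F''|.+1.
  by case: feasF'' => cardF'' _ _; rewrite cardsU1 kF cardF cardF''.
have [y yF'' eFk] := subset_card_succ sub cardFk.
have eF'' : F'' = (k |: F) :\ y by rewrite eFk setU1K.
have [eyk|yk] := eqVneq y k.
  by move: ne; rewrite eF'' eyk setU1K // eqxx.
have yF : y \in F by move: (setU11 y F''); rewrite -eFk !inE (negbTE yk).
have {}eF'' : F'' = k |: F :\ y.
  rewrite eF''; apply/setP => x; rewrite !inE.
  by case: (eqVneq x k) => [->|//]; rewrite eq_sym yk.
rewrite eF'' in feasF''.
have rty := ratio_test_of_feasible indepF solL posL kF yF feasF''.
by rewrite eF'' (ratio_test_uniq yF lF rty rt).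
Qed.

Lemma state_not_slack_but F O k : scarf_state (F, O) -> F != slacks ->
  k \notin F -> O = k |: F :\ s0 -> forall r, O :\ k != slack_but slack r.
Proof.
move=> [_ _ /= s0F _ _] Fslacks kF -> r.
rewrite setU1K ?inE ?(negbTE kF) ?andbF //.
have [-> |ri0] := eqVneq r i0.
  rewrite slack_but_i0; apply: contra Fslacks => /eqP Fs0.
  by rewrite -(setD1K s0F) Fs0 setD1K // imset_f.
apply/eqP => Fs0; have : s0 \in slack_but slack r by rewrite imset_f // !inE eq_sym.
by rewrite -Fs0 setD11.
Qed.

Lemma states_ordinal_partner s : s \in states :\: initial_states ->
  (exists F, scarf_basis F) \/ exists t,
    [/\ t \in states :\: initial_states, t != s, s.1 = t.1 &
     {in states :\: initial_states, forall t', t' != s -> s.1 = t'.1 -> t' = t}].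
Proof.
case: s => F O; rewrite in_noninitial_states => /andP[/asboolP st /= Fslacks].
have [k kF eO] := scarf_state_shape st.
have Ok : O :\ k = F :\ s0 by rewrite eO setU1K // !inE (negbTE kF) andbF.
have kO : k \in O by rewrite eO setU11.
have [feasF basisO /= s0F s0O _] := st.
have [k' [k'O basisO' k'_uniq]] := ordinal_pivot c_inj slack_inj slack_worst
  slack_best basisO kO (state_not_slack_but st Fslacks kF eO).
have [k's0|k's0] := eqVneq k' s0; [left; exists F | right; exists (F, k' |: O :\ k)].
  by split=> //; rewrite -(setD1K s0F) -Ok -k's0.
split=> //=.
- rewrite in_noninitial_states Fslacks andbT; apply/asboolP; split=> //=.
    by rewrite !inE negb_or eq_sym k's0 (negbTE s0O) andbF.
  by rewrite -Ok subsetUr.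
- by apply/negP => /eqP[eO']; move: k'O; rewrite -eO' setU11.
move=> [F'' O'']; rewrite in_noninitial_states => /andP[/asboolP st'' _] ne /= eF.
subst F''.
have [z zF eO''] := scarf_state_shape st''.
have [_ basisO'' _ _ _] := st''; rewrite /= eO'' -Ok in basisO''.
rewrite eO'' -Ok in ne *; have [ezk|-> //] := k'_uniq z basisO''.
by move: ne; rewrite ezk setD1K ?eqxx.
Qed.

Definition nonslack x := [forall r, x != slack r].

Lemma card_slacks_s0 : #|slacks :\ s0| = m.-1.
Proof. by rewrite -slack_but_i0 (card_slack_but slack_inj). Qed.

Lemma slack_lb i X : row_lb c i X (slack i).
Proof.
apply/row_lbP => j _; have [->//|js] := eqVneq j (slack i).
exact: ltnW (slack_worst js).
Qed.

Lemma initial_ordinal_basis k : nonslack k ->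
  (forall x, nonslack x -> (c i0 x <= c i0 k)%N) ->
  ordinal_basis c (k |: slacks :\ s0).
Proof.
move=> /forallP kslack kmax; split.
  have kS : k \notin slacks :\ s0.
    by apply/negP => /setD1P[_ /imsetP[r _ kr]]; move: (kslack r); rewrite kr eqxx.
  have m_pos : (0 < m)%N := leq_ltn_trans (leq0n i0) (ltn_ord i0).
  by rewrite cardsU1 kS card_slacks_s0 add1n prednK.
move=> z; have [zslack|] := boolP (nonslack z); last first.
  by case/forallPn => r /negbNE /eqP ->; exists r; apply: slack_lb.
exists i0; apply/row_lbP => j; rewrite in_setU1 => /predU1P[->|/setD1P[js0]].
  exact: kmax.
case/imsetP => r _ jr; subst j; apply: ltnW; apply: slack_best; last exact/forallP.
by apply: contraNneq js0 => ->.
Qed.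

Lemma initial_state_uniq k O : nonslack k ->
  (forall x, nonslack x -> (c i0 x <= c i0 k)%N) ->
  scarf_state (slacks, O) -> O = k |: slacks :\ s0.
Proof.
move=> kslack kmax st; have [k' k'S eO] := scarf_state_shape st.
have [_ [_ dom] _ _ _] := st; rewrite eO in dom *.
have k'slack : nonslack k'.
  by apply/forallP => r; apply: contraNneq k'S => ->; apply: imset_f.
have [i klb] := dom k.
have ei : i = i0.
  apply/eqP; apply: contraT => ii0.
  have : slack i \in k' |: slacks :\ s0.
    by rewrite !inE imset_f // (inj_eq slack_inj) ii0 orbT.
  move/(row_lbP klb); rewrite leqNgt slack_worst //.
  by apply/negP => /eqP ki; move/forallP/(_ i): kslack; rewrite ki eqxx.
subst i; congr (_ |: _); apply: (@c_inj i0); apply/eqP.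
by rewrite eqn_leq kmax // (row_lbP klb) ?setU11.
Qed.

Lemma card_initial_states : (exists F, scarf_basis F) \/ #|initial_states| = 1%N.
Proof.
have feas0 := lex_feasible_slacks slack_inj A_slack b_pos.
have [x0 x0slack|allslack] := pickP nonslack; last first.
  left; exists slacks; split=> //; split=> [|z]; first by case: feas0.
  have /forallPn[r /negbNE /eqP ->] := negbT (allslack z).
  by exists r; apply: slack_lb.
right; pose k := [arg max_(x > x0 | nonslack x) c i0 x].
have [kslack kmax] : nonslack k /\ forall x, nonslack x -> (c i0 x <= c i0 k)%N.
  by rewrite /k; case: arg_maxnP.
apply/eqP/cards1P; exists (slacks, k |: slacks :\ s0); apply/setP => -[F O].
rewrite !inE; apply/andP/eqP => [[/asboolP st /eqP /= eF]|[-> ->]].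
  by rewrite eF in st *; rewrite (initial_state_uniq kslack kmax st).
split=> //; apply/asboolP; split=> //=.
- exact: initial_ordinal_basis.
- exact: imset_f.
- rewrite in_setU1 setD11 orbF.
  by apply/eqP => ks0; move/forallP/(_ i0): kslack; rewrite -ks0 eqxx.
- exact: subsetUr.
Qed.

Lemma scarf_basis_exists_pos : exists F, scarf_basis F.
Proof.
apply: contrapT => none.
have no_basis P : (exists F, scarf_basis F) \/ P -> P by case=> // /none.
have even_states : ~~ odd #|states|.
  apply: (@even_card_partner _ (fun s t => s.2 = t.2)) => [s t ->//|s sS].
  exact: no_basis (states_feasible_partner sS).
have even_rest : ~~ odd #|states :\: initial_states|.
  apply: (@even_card_partner _ (fun s t => s.1 = t.1)) => [s t ->//|s sS].
  exact: no_basis (states_ordinal_partner sS).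
have initial_sub : initial_states \subset states.
  by apply/subsetP => s; rewrite inE => /andP[].
move: even_states; rewrite -(cardsID initial_states states) (setIidPr initial_sub).
by rewrite (no_basis _ card_initial_states) /= even_rest.
Qed.

End Parity.

Lemma scarf_basis_exists : exists F, scarf_basis F.
Proof.
have [m0|m_pos] := posnP m; last exact: scarf_basis_exists_pos (Ordinal m_pos).
have no_row (r : 'I_m) : False by case: r => r; rewrite m0.
exists set0; split; split; rewrite ?cards0 ?m0 //.
- by move=> mu mu0 _ l; apply: mu0; rewrite inE.
- by exists (fun _ _ => 0) => [|l]; [split=> // t r; case: (no_row r) | rewrite inE].
- by move=> z; have [r _] := A_col_neq0 z; case: (no_row r).
Qed.

Theorem scarf : exists x : C -> R, [/\ forall j, 0 <= x j,
  forall r, \sum_j x j * A r j = b r &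
  forall z, exists i, forall j, x j != 0 -> (c i z <= c i j)%N].
Proof.
have [F [[_ _ [L [L0 Lsum] posL]] [_ dom]]] := scarf_basis_exists.
have supp j : L ord0 j != 0 -> j \in F by apply: contraR => /L0 ->.
exists (L ord0); split=> [j|r|z].
- by have [/posL/lex_pos_ge0|/L0 ->] := boolP (j \in F).
- by rewrite Lsum /rhs eqxx.
- by have [i /row_lbP zlb] := dom z; exists i => j /supp; apply: zlb.
Qed.

End Scarf.

Local Close Scope ring_scope.

(** * Exchanges and utilities *)

Lemma card_set_nat (T : finType) (P : pred T) : #|[set x | P x]| = \sum_x P x.
Proof. by rewrite -sum1_card big_mkcond /=; apply: eq_bigr => x _; rewrite inE. Qed.

Section Exchanges.
Variables (T : finType) (e : rel T) (D : nat) (W : {set T}) (X : {set cyc T}).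
Hypothesis exX : exchange e D W X.

Lemma sum_on_cyc_exchange v : \sum_(c in X) on_cyc c v = covered X v.
Proof.
have [_ disj] := exX; have [/exists_inP[c0 c0X on0]|nocov] := boolP (covered X v).
  rewrite (bigD1 c0) //= on0 big1 // => c /andP[cX cc0].
  by have := disj c c0 cX c0X cc0 v; rewrite on0 andbT => /negbTE ->.
rewrite big1 // => c cX; apply/eqP; rewrite eqb0.
by apply: contra nocov => onc; apply/exists_inP; exists c.
Qed.

Lemma sum_cycles_on_exchange_le (R : numDomainType) v :
  (\sum_(c | is_cycle e D c && on_cyc c v) (c \in X)%:R <= (v \in W)%:R :> R)%R.
Proof.
have [cyc_in _] := exX.
have [/existsP[c0 /and3P[cyc0 on0 c0X]]|none] :=
  boolP [exists c, [&& is_cycle e D c, on_cyc c v & c \in X]].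
  rewrite (cyc_in c0 c0X).2 // (bigD1 c0) ?cyc0 ?on0 //= c0X big1 ?addr0 //.
  move=> c /andP[/andP[_ onc] cc0]; case: (boolP (c \in X)) => // cX.
  by have := exX.2 c c0 cX c0X cc0 v; rewrite onc on0.
rewrite big1 ?ler0n // => c /andP[cyc onc]; case: (boolP (c \in X)) => // cX.
by case/existsP: none; exists c; rewrite cyc onc cX.
Qed.

Variables (n : nat) (org : T -> 'I_n) (U : {set T}).

Lemma util_exchange i : util org U i X = \sum_(c in X) gamma org U i c.
Proof.
rewrite /util /gamma card_set_nat; under [RHS]eq_bigr => c _ do rewrite card_set_nat.
rewrite exchange_big /=; apply: eq_bigr => v _; rewrite andbA.
under eq_bigr => c _ do rewrite andbA.
by case: ((v \in U) && (org v == i)); rewrite /= ?sum_on_cyc_exchange ?big1_eq.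
Qed.

Lemma sum_gamma_exchange (R : pzSemiRingType) i :
  (\sum_(c | is_cycle e D c) (gamma org U i c)%:R * (c \in X)%:R =
   (util org U i X)%:R :> R)%R.
Proof.
rewrite util_exchange natr_sum big_mkcond [RHS]big_mkcond; apply: eq_bigr => c _ /=.
have [cX|cX] := boolP (c \in X); first by rewrite (exX.1 c cX).1 mulr1.
by rewrite mulr0; case: (is_cycle e D c).
Qed.

End Exchanges.

Lemma util_set0 (T : finType) n (org : T -> 'I_n) U i : util org U i set0 = 0.
Proof.
apply/eqP; rewrite cards_eq0; apply/eqP/setP => v; rewrite !inE.
have -> : covered set0 v = false by apply/exists_inP => -[c]; rewrite inE.
by rewrite !andbF.
Qed.

(** * Scarf's matrix of a partition exchange economy *)

Section Columns.
Variables (V : finType) (n : nat) (org : V -> 'I_n) (U : {set V}) (E : rel V) (D : nat).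

Definition coalition_exchange (p : {set 'I_n} * {set cyc V}) :=
  (p.1 != set0) && `[< exchange E D [set v | org v \in p.1] p.2 >].

Local Notation column := {p | coalition_exchange p}.

Lemma column_exchange (j : column) :
  exchange E D [set v | org v \in (val j).1] (val j).2.
Proof. by case/andP: (valP j) => _ /asboolP. Qed.

Lemma coalition_exchange_alone i : coalition_exchange ([set i], set0).
Proof.
rewrite /coalition_exchange /=; apply/andP; split.
  by apply/set0Pn; exists i; rewrite set11.
by apply/asboolP; split=> [c|c1 c2]; rewrite inE.
Qed.

Definition alone i : column := exist _ ([set i], set0) (coalition_exchange_alone i).

Lemma alone_inj : injective alone.
Proof.
by move=> i1 i2 /(congr1 val) [] /setP /(_ i1); rewrite !inE eqxx => /esym/eqP.
Qed.

Definition col_util i (j : column) := util org U i (val j).2.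

Definition tier i (j : column) : nat :=
  if j == alone i then 0 else if i \in (val j).1 then 1
  else if [exists r, j == alone r] then 3 else 2.

Definition base := (#|{: column}| + #|V|).+1.

(* [pref i] orders the columns lexicographically by tier, then by the utility
   of [i], then by [enum_rank]: these are its digits in base [base]. *)
Definition pref i (j : column) :=
  (tier i j * base + col_util i j) * base + enum_rank j.

Lemma col_util_lt i (j : column) : col_util i j < base.
Proof. by rewrite /col_util ltnS (leq_trans (max_card _)) // leq_addl. Qed.

Lemma enum_rank_lt (j : column) : enum_rank j < base.
Proof. by rewrite ltnS (leq_trans (ltnW (ltn_ord _))) // leq_addr. Qed.

Lemma pref_inj i : injective (pref i).
Proof.
move=> j1 j2 e; apply: enum_rank_inj; apply: val_inj.
have := congr1 (modn^~ base) e.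
by rewrite /pref !modnMDl !modn_small // enum_rank_lt.
Qed.

Lemma pref_lt_tier i (j z : column) : tier i j < tier i z -> pref i j < pref i z.
Proof.
have := col_util_lt i j; have := col_util_lt i z.
have := enum_rank_lt j; have := enum_rank_lt z; rewrite /pref; nia.
Qed.

Lemma pref_le_util i (j z : column) : tier i j = tier i z -> pref i z <= pref i j ->
  col_util i z <= col_util i j.
Proof.
have := col_util_lt i j; have := col_util_lt i z.
have := enum_rank_lt j; have := enum_rank_lt z; rewrite /pref; nia.
Qed.

Lemma tier_alone i : tier i (alone i) = 0.
Proof. by rewrite /tier eqxx. Qed.

Lemma tier_member i (j : column) : i \in (val j).1 -> j != alone i -> tier i j = 1.
Proof. by rewrite /tier => -> /negbTE ->. Qed.

Lemma tier_nonmember i (j : column) : i \notin (val j).1 -> 2 <= tier i j.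
Proof.
move=> ij; rewrite /tier (negbTE ij).
have -> : (j == alone i) = false by apply: contraNF ij => /eqP ->; rewrite /= set11.
by case: ifP.
Qed.

Lemma pref_alone_worst i (j : column) : j != alone i -> pref i (alone i) < pref i j.
Proof.
move=> ji; apply: pref_lt_tier; rewrite tier_alone lt0n /tier.
by rewrite (negbTE ji); case: ifP => //; case: ifP.
Qed.

Lemma pref_alone_best i r (j : column) : r != i -> (forall r', j != alone r') ->
  pref i j < pref i (alone r).
Proof.
move=> ri jslack; apply: pref_lt_tier.
have -> : tier i (alone r) = 3.
  rewrite /tier (inj_eq alone_inj) (negbTE ri) /= inE eq_sym (negbTE ri).
  by case: existsP => // -[]; exists r.
rewrite /tier (negbTE (jslack i)); case: ifP => // _.
by case: existsP => // -[r' /eqP jr']; case/eqP: (jslack r').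
Qed.

Lemma scarf_weights (R : realType) : exists x : column -> R,
  [/\ forall j, (0 <= x j)%R, forall i, (\sum_j x j * (i \in (val j).1)%:R = 1)%R &
      forall z, exists i, forall j, x j != 0%R -> pref i z <= pref i j].
Proof.
have col_member (j : column) : exists i, ((i \in (val j).1)%:R != 0 :> R)%R.
  by have /andP[/set0Pn[i ij] _] := valP j; exists i; rewrite ij oner_neq0.
have alone_col i r : ((i \in (val (alone r)).1)%:R = (i == r)%:R :> R)%R.
  by rewrite /= inE.
exact: scarf (fun _ _ => ler0n _ _) col_member alone_col (fun=> @ltr01 R)
  pref_inj pref_alone_worst pref_alone_best.
Qed.

Section Weights.
Variables (R : realType) (x : column -> R).
Hypotheses (x_ge0 : forall j, (0 <= x j)%R)
  (x_sum : forall i, (\sum_j x j * (i \in (val j).1)%:R = 1)%R)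
  (x_dom : forall z, exists i, forall j, x j != 0%R -> pref i z <= pref i j).

Definition weighted_frac (c : cyc V) : R := (\sum_j x j * (c \in (val j).2)%:R)%R.

Lemma frac_exchange_weighted : frac_exchange E D weighted_frac.
Proof.
have cap v : (\sum_(c | is_cycle E D c && on_cyc c v) weighted_frac c <= 1)%R.
  rewrite /weighted_frac exchange_big /= -[X in (_ <= X)%R](x_sum (org v)).
  apply: ler_sum => j _; rewrite -mulr_sumr; apply: ler_wpM2l => //.
  by have := sum_cycles_on_exchange_le (column_exchange j) R v; rewrite inE.
split=> // c cyc_c; rewrite sumr_ge0 => [|j _]; last by rewrite mulr_ge0.
have [/existsP[v onv] _ _ _] := and4P cyc_c.
apply: le_trans (cap v); rewrite (bigD1 c) ?cyc_c //= lerDl.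
by rewrite sumr_ge0 // => c' _; rewrite sumr_ge0 // => j _; rewrite mulr_ge0.
Qed.

Lemma frac_util_weighted i :
  frac_util org U E D weighted_frac i = (\sum_j x j * (col_util i j)%:R)%R.
Proof.
rewrite /frac_util /weighted_frac; under eq_bigr => c _ do rewrite mulr_sumr.
rewrite exchange_big /=; apply: eq_bigr => j _.
under eq_bigr => c _ do rewrite mulrCA.
by rewrite -mulr_sumr (sum_gamma_exchange (column_exchange j)).
Qed.

Lemma weighted_frac_unblocked (z : column) : exists2 i, i \in (val z).1 &
  ((col_util i z)%:R <= frac_util org U E D weighted_frac i)%R.
Proof.
have [i z_dom] := x_dom z.
have [j xj ij] : exists2 j, x j != 0%R & i \in (val j).1.
  apply: contrapT => none; have := x_sum i; rewrite big1 => [/eqP|j _].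
    by rewrite eq_sym oner_eq0.
  have [->|xj] := eqVneq (x j) 0%R; first by rewrite mul0r.
  by case: (boolP (i \in (val j).1)) => ij; [case: none; exists j | rewrite mulr0].
have iz : i \in (val z).1.
  apply: contraT => /tier_nonmember tz.
  suff : pref i j < pref i z by rewrite ltnNge z_dom.
  apply: pref_lt_tier; apply: leq_trans tz; rewrite /tier.
  by case: (j == alone i); rewrite ?ij.
exists i => //; rewrite frac_util_weighted.
have -> : ((col_util i z)%:R =
    \sum_j' x j' * (i \in (val j').1)%:R * (col_util i z)%:R :> R)%R.
  by rewrite -mulr_suml x_sum mul1r.
apply: ler_sum => j' _.
have [->|xj'] := eqVneq (x j') 0%R; first by rewrite !mul0r.
rewrite -mulrA; apply: ler_wpM2l => //.
have [ij'|_] := boolP (i \in (val j').1); last by rewrite mul0r ler0n.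
rewrite mul1r ler_nat; have [->|zi] := eqVneq z (alone i).
  by rewrite /col_util util_set0.
have tz := tier_member iz zi.
have j'i : j' != alone i.
  apply: contraTneq (z_dom j' xj') => ->; rewrite -ltnNge pref_lt_tier //.
  by rewrite tier_alone tz.
by apply: pref_le_util (z_dom j' xj'); rewrite tz (tier_member ij' j'i).
Qed.

Lemma weighted_frac_core (A : finType) (X : {set cyc (V + A)%type}) :
  (forall i, (Num.floor (frac_util org U E D weighted_frac i) <=
              (util_ext org U i X)%:Z)%R) ->
  in_supp_core org U E D X.
Proof.
move=> X_floor P P0 [X' [X'exch X'better]].
have PX' : coalition_exchange (P, X') by rewrite /coalition_exchange P0; apply/asboolP.
have [i iP le_frac] := weighted_frac_unblocked (exist _ (P, X') PX').
have : ((col_util i (exist _ (P, X') PX'))%:Z <=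
         Num.floor (frac_util org U E D weighted_frac i))%R.
  by rewrite floor_ge_int -pmulrn.
by move/le_trans/(_ (X_floor i)); rewrite lez_nat leqNgt X'better.
Qed.

End Weights.

End Columns.

Theorem mainTheorem1 (R : realType) (V : finType) (n : nat)
    (org : V -> 'I_n) (U : {set V}) (E : rel V) (D : nat) :
  (forall v, ~~ E v v) -> (2 <= D)%N ->
  exists y : cyc V -> R,
    frac_exchange E D y /\
    forall (A : finType) (out : A -> V -> bool) (X : {set cyc (V + A)%type}),
      exchange (ext_graph E out) D [set: (V + A)%type] X ->
      (forall i : 'I_n,
         (Num.floor (frac_util org U E D y i) <= (util_ext org U i X)%:Z)%R) ->
      in_supp_core org U E D X.
Proof.
move=> _ _; have [x [x_ge0 x_sum x_dom]] := scarf_weights org U E D R.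
exists (weighted_frac x); split; first exact: frac_exchange_weighted x_ge0 x_sum.
move=> A out X _; exact: (weighted_frac_core x_ge0 x_sum x_dom).
Qed.
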